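(* Let $\mathcal{H}_C$ and $\mathcal{H}_P$ be finite-dimensional complex Hilbert spaces and let $\rho$ be any (possibly mixed) state on $\mathcal{H}_C\otimes\mathcal{H}_P$. Then $\mathcal{D}(P|C)\le Q(\rho)$, i.e. the quantum discord of $\rho$ is at most its measurement-induced disturbance (for every admissible choice of eigenbases in the definition of $\Pi$).
   Context: All entropies are von Neumann entropies $S(\sigma)=-\mathrm{Tr}\,\sigma\ln\sigma$. For a state $\rho$ on $\mathcal{H}_C\otimes\mathcal{H}_P$ write $\rho_C=\mathrm{Tr}_P\rho$, $\rho_P=\mathrm{Tr}_C\rho$, $S(C)=S(\rho_C)$, $S(P,C)=S(\rho)$, $S(P|C)=S(P,C)-S(C)$, and mutual information $I(\rho)=S(\rho_C)+S(\rho_P)-S(\rho)$. Measurement-induced disturbance: write spectral decompositions $\rho_C=\sum_i p_C^i\Pi_C^i$ and $\rho_P=\sum_j p_P^j\Pi_P^j$ with $\{\Pi_C^i\}$, $\{\Pi_P^j\}$ rank-one projectors onto orthonormal eigenbases of $\rho_C$ and $\rho_P$; set $\Pi(\rho)=\sum_{i,j}(\Pi_C^i\otimes\Pi_P^j)\rho(\Pi_C^i\otimes\Pi_P^j)$ and $Q(\rho)=I(\rho)-I(\Pi(\rho))$. Quantum discord: for a rank-one projective measurement $\{N_j^C\}$ on $\mathcal{H}_C$, let $p_j=\mathrm{Tr}[(N_j^C\otimes\mathbb{1}_P)\rho]$, $\rho_{P|j}=\mathrm{Tr}_C[(N_j^C\otimes\mathbb{1}_P)\rho]/p_j$ for $p_j>0$,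 and $S(P|\{N_j^C\})=\sum_j p_jS(\rho_{P|j})$. Then $\mathcal{D}(P|C)=\min_{\{N_j^C\}}S(P|\{N_j^C\})-S(P|C)$, minimum over all rank-one projective measurements on $C$. *)

From HB Require Import structures.
From mathcomp Require Import all_boot all_order all_algebra.
From mathcomp Require Import sesquilinear spectral.
From mathcomp Require Import complex mxtens.
From mathcomp Require Import all_classical all_reals.
From mathcomp Require Import exp.

Set Implicit Arguments.
Unset Strict Implicit.
Unset Printing Implicit Defensive.

Import Order.TTheory GRing.Theory Num.Theory Num.Def.
Local Open Scope ring_scope.
Local Open Scope sesquilinear_scope.
Local Open Scope classical_set_scope.

Section QInfo.
Variable R : realType.
Local Notation C := R[i].

Definition adjmx m n (A : 'M[C]_(m, n)) : 'M[C]_(n, m) := A ^t conjC.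

Definition density n (rho : 'M[C]_n) : Prop :=
  rho \is hermsymmx /\
  (forall x : 'cV[C]_n, 0 <= (adjmx x *m rho *m x) 0 0) /\
  \tr rho = 1.

Definition eta (x : R) : R := if x == 0 then 0 else x * ln x.

(* von Neumann entropy S(s) = - Tr s ln s = - sum over eigenvalues lambda of
   lambda ln lambda; eigenvalues (with multiplicity) of the normal matrix s
   are the entries of the diagonal of its spectral decomposition
   s = P^-1 diag(spectral_diag s) P (P unitary). *)
Definition vN_entropy n (s : 'M[C]_n) : R :=
  - \sum_(i < n) eta (complex.Re (spectral_diag s 0 i)).

Definition ptrP nC nP (rho : 'M[C]_(nC * nP)) : 'M[C]_nC :=
  \matrix_(i, k) \sum_(j < nP) rho (mxtens_index (i, j)) (mxtens_index (k, j)).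
Definition ptrC nC nP (rho : 'M[C]_(nC * nP)) : 'M[C]_nP :=
  \matrix_(j, l) \sum_(i < nC) rho (mxtens_index (i, j)) (mxtens_index (i, l)).

Definition mutual_info nC nP (rho : 'M[C]_(nC * nP)) : R :=
  vN_entropy (ptrP rho) + vN_entropy (ptrC rho) - vN_entropy rho.

Definition orth_eigenbasis n (A U : 'M[C]_n) : Prop :=
  adjmx U *m U = 1%:M /\
  forall i : 'I_n, exists l : C, A *m col i U = l *: col i U.

Definition proj1 n (U : 'M[C]_n) (i : 'I_n) : 'M[C]_n :=
  col i U *m adjmx (col i U).

Definition Pi_meas nC nP (rho : 'M[C]_(nC * nP)) (U : 'M[C]_nC) (V : 'M[C]_nP)
  : 'M[C]_(nC * nP) :=
  \sum_(i < nC) \sum_(j < nP)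
     ((proj1 U i *t proj1 V j) *m rho *m (proj1 U i *t proj1 V j)).

Definition MID nC nP (rho : 'M[C]_(nC * nP)) (U : 'M[C]_nC) (V : 'M[C]_nP) : R :=
  mutual_info rho - mutual_info (Pi_meas rho U V).

Definition rank1_pvm n k (N : 'I_k -> 'M[C]_n) : Prop :=
  (forall j, N j \is hermsymmx /\ N j *m N j = N j /\ \rank (N j) = 1%N) /\
  \sum_(j < k) N j = 1%:M.

(* outcome probability p_j = Tr[(N_j (x) 1) rho] (real part; it is real) *)
Definition outcome_prob nC nP k (rho : 'M[C]_(nC * nP)) (N : 'I_k -> 'M[C]_nC)
  (j : 'I_k) : R :=
  complex.Re (\tr ((N j *t (1%:M : 'M[C]_nP)) *m rho)).

Definition post_state nC nP k (rho : 'M[C]_(nC * nP)) (N : 'I_k -> 'M[C]_nC)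
  (j : 'I_k) : 'M[C]_nP :=
  ((outcome_prob rho N j)%:C%C)^-1 *: ptrC ((N j *t (1%:M : 'M[C]_nP)) *m rho).

Definition cond_entropy_meas nC nP k (rho : 'M[C]_(nC * nP))
  (N : 'I_k -> 'M[C]_nC) : R :=
  \sum_(j < k | 0 < outcome_prob rho N j)
     outcome_prob rho N j * vN_entropy (post_state rho N j).

Definition cond_entropy nC nP (rho : 'M[C]_(nC * nP)) : R :=
  vN_entropy rho - vN_entropy (ptrP rho).

(* quantum discord D(P|C) = min_{N} S(P|{N}) - S(P|C); the minimum over all
   rank-one projective measurements on H_C is written as an infimum *)
Definition discord nC nP (rho : 'M[C]_(nC * nP)) : R :=
  inf [set x : R | exists k (N : 'I_k -> 'M[C]_nC),
          rank1_pvm N /\ x = cond_entropy_meas rho N]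
  - cond_entropy rho.

End QInfo.

(* Measure C in the eigenbasis u_i of rho_C.  Write q_ij for the diagonal
   entries of rho in the product eigenbasis u_i (x) v_j and a_i = sum_j q_ij.
   Then Pi(rho) is diagonal with entries q_ij and has the same marginals as
   rho, so Q(rho) = H(q) - S(rho), while S(rho_C) = H(a).  The post-measurement
   state rho_{P|i} has diagonal q_i./a_i in the basis v_j, and the entropy of
   the diagonal of a state in any orthonormal basis dominates its von Neumann
   entropy: the diagonal is the image of the spectrum under the doubly
   stochastic matrix |<e_k, w_j>|^2, and x ln x is convex.  Hence
   S(P|{u_i u_i^*}) <= H(q) - H(a), i.e. D(P|C) <= H(q) - S(rho) = Q(rho). *)

From HB Require Import structures.
From mathcomp Require Import all_boot all_order all_algebra.
From mathcomp Require Import sesquilinear spectral.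
From mathcomp Require Import complex mxtens.
From mathcomp Require Import all_classical all_reals.
From mathcomp Require Import exp.
From mathcomp Require Import ring lra.

Set Implicit Arguments.
Unset Strict Implicit.
Unset Printing Implicit Defensive.
Import Order.TTheory GRing.Theory Num.Theory.
Local Open Scope ring_scope.

Section Eta.
Variable R : realType.

Lemma eta_ge_tangent (a y : R) : 0 < a -> 0 <= y -> y * ln a + y - a <= eta y.
Proof.
move=> a0; rewrite le_eqVlt => /orP[/eqP<-|y0].
  by rewrite /eta eqxx mul0r !add0r oppr_le0 ltW.
rewrite /eta gt_eqF //.
have : -1 < a / y - 1 by have := divr_gt0 a0 y0; lra.
move=> /le_ln1Dx; rewrite addrC subrK ln_div ?posrE // => H.
have := ler_wpM2l (ltW y0) H.
rewrite mulrBr mulrBr mulr1 mulrCA mulfV ?gt_eqF // mulr1.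
lra.
Qed.

Lemma eta_jensen (I : finType) (c y : I -> R) :
  (forall k, 0 <= c k) -> (forall k, 0 <= y k) -> \sum_k c k = 1 ->
  eta (\sum_k c k * y k) <= \sum_k c k * eta (y k).
Proof.
move=> c0 y0 c1; set m := \sum_k c k * y k.
have cy0 k : 0 <= c k * y k by rewrite mulr_ge0.
have [mp|] := ltrP 0 m.
  apply: (@le_trans _ _ (\sum_k c k * (y k * ln m + y k - m))); last first.
    by apply: ler_sum => k _; apply: ler_wpM2l => //; apply: eta_ge_tangent.
  rewrite (eq_bigr (fun k => c k * y k * ln m + c k * y k - c k * m)); last first.
    by move=> k _; rewrite mulrBr mulrDr mulrA.
  rewrite sumrB big_split /= -!mulr_suml c1 mul1r /eta gt_eqF // -/m mulrC; lra.
rewrite le_eqVlt ltNge sumr_ge0 // orbF => /eqP m0.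
have cy00 k : c k * y k = 0.
  by move/eqP: m0; rewrite psumr_eq0 // => /allP /(_ k (mem_index_enum _)) /eqP.
rewrite m0 /eta eqxx; apply: sumr_ge0 => k _.
by case: eqP => _; rewrite ?mulr0 // mulrA cy00 mul0r.
Qed.

Lemma sum_eta_doubly_stochastic n (M : 'I_n -> 'I_n -> R) (r : 'I_n -> R) :
  (forall k j, 0 <= M k j) -> (forall k, \sum_j M k j = 1) ->
  (forall j, \sum_k M k j = 1) -> (forall k, 0 <= r k) ->
  \sum_j eta (\sum_k M k j * r k) <= \sum_k eta (r k).
Proof.
move=> M0 Mrow Mcol r0.
apply: (@le_trans _ _ (\sum_j \sum_k M k j * eta (r k))).
  by apply: ler_sum => j _; apply: eta_jensen.
rewrite exchange_big /=; under eq_bigr => k _ do rewrite -mulr_suml Mrow mul1r.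
exact: lexx.
Qed.

Lemma sum_eta_le_eta_sum (I : finType) (q : I -> R) : (forall k, 0 <= q k) ->
  \sum_k eta (q k) <= eta (\sum_k q k).
Proof.
move=> q0; set a := \sum_k q k.
have le_qa k : q k <= a by rewrite /a (bigD1 k) //= lerDl sumr_ge0.
have eta_le k : eta (q k) <= q k * ln a.
  rewrite /eta; case: eqP => [->|/eqP qk0]; first by rewrite mul0r.
  have qp : 0 < q k by rewrite lt_def qk0 q0.
  by rewrite ler_wpM2l ?ler_ln ?posrE // (lt_le_trans qp).
apply: (le_trans (ler_sum _ (fun k _ => eta_le k))).
by rewrite -mulr_suml -/a /eta; case: eqP => [->|_]; rewrite ?mul0r.
Qed.

Lemma mulr_eta_invl (p q : R) : 0 < p -> 0 <= q ->
  p * eta (p^-1 * q) = eta q - q * ln p.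
Proof.
move=> p0; rewrite le_eqVlt => /orP[/eqP<-|q0].
  by rewrite mulr0 /eta eqxx mulr0 mul0r subr0.
have pq : 0 < p^-1 * q by rewrite mulr_gt0 ?invr_gt0.
rewrite /eta !gt_eqF // lnM ?posrE ?invr_gt0 // lnV ?posrE //.
rewrite !mulrA mulfV ?gt_eqF // mul1r; ring.
Qed.

(* If [E] has no lower bound, [inf E] is [0]; hence the hypothesis [0 <= t]. *)
Lemma inf_le_ub (E : set R) (v t : R) : E v -> v <= t -> 0 <= t -> inf E <= t.
Proof.
move=> Ev vt t0; have [lbE|nlbE] := pselect (has_lbound E).
  exact: le_trans (ge_inf lbE Ev) vt.
by rewrite inf_out // => -[].
Qed.

End Eta.

Section ComplexMatrices.
Variable R : realType.
Local Notation C := R[i].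

Lemma ge0_complex_real (c : C) : 0 <= c -> c = (complex.Re c)%:C%C /\ 0 <= complex.Re c.
Proof. by rewrite lecE /= => /andP[/eqP]; case: c => a b /= -> ->. Qed.

Definition sqmod (z : C) : R := complex.Re (z * z^*).

Lemma sqmodE (z : C) : z * z^* = (sqmod z)%:C%C.
Proof. by have [] := ge0_complex_real (mul_conjC_ge0 z). Qed.

Lemma sqmod_ge0 (z : C) : 0 <= sqmod z.
Proof. by have [] := ge0_complex_real (mul_conjC_ge0 z). Qed.

Lemma adjmxE m n (A : 'M[C]_(m, n)) i j : adjmx A i j = (A j i)^*.
Proof. by rewrite !mxE. Qed.

Lemma adjmxM m n p (A : 'M[C]_(m, n)) (B : 'M[C]_(n, p)) :
  adjmx (A *m B) = adjmx B *m adjmx A.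
Proof. by rewrite /adjmx trmx_mul map_mxM. Qed.

Lemma adjmxK m n (A : 'M[C]_(m, n)) : adjmx (adjmx A) = A.
Proof. by apply/matrixP => i j; rewrite !mxE conjCK. Qed.

Lemma adjmx_scale_real m n (c : R) (A : 'M[C]_(m, n)) :
  adjmx ((c%:C)%C *: A) = (c%:C)%C *: adjmx A.
Proof.
have cR : ((c%:C)%C : C)^* = (c%:C)%C by exact: conjc_real.
by apply/matrixP => i j; rewrite !mxE rmorphM /= cR.
Qed.

Lemma adjmx_tens n1 n2 m1 m2 (A : 'M[C]_(n1, n2)) (B : 'M[C]_(m1, m2)) :
  adjmx (A *t B) = adjmx A *t adjmx B.
Proof. by rewrite /adjmx trmx_tens map_mxT. Qed.

Lemma hermsymmx_entry n (A : 'M[C]_n) :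
  (forall i j, A j i = (A i j)^*) -> A \is hermsymmx.
Proof.
move=> h; apply/is_hermitianmxP; rewrite expr0 scale1r.
by apply/matrixP => i j; rewrite !mxE h.
Qed.

Lemma adjmx_hermsymmx n (A : 'M[C]_n) : adjmx A = A -> A \is hermsymmx.
Proof. by move=> h; apply: hermsymmx_entry => i j; rewrite -{1}h adjmxE. Qed.

Lemma hermsymmx_adjmx n (A : 'M[C]_n) : A \is hermsymmx -> adjmx A = A.
Proof. by move=> /is_hermitianmxP; rewrite expr0 scale1r => h; rewrite {2}h. Qed.

Lemma mx11_mulE (M N : 'M[C]_1) : (M *m N) 0 0 = M 0 0 * N 0 0.
Proof. by rewrite mxE big_ord1. Qed.

Lemma adjcol_mulE n (W : 'M[C]_n) j k :
  (adjmx (col j W) *m col k W) 0 0 = (adjmx W *m W) j k.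
Proof. by rewrite !mxE; apply: eq_bigr => l _; rewrite !mxE. Qed.

Lemma adjmx_mul_conj n (x y : 'cV[C]_n) :
  (adjmx y *m x) 0 0 = ((adjmx x *m y) 0 0)^*.
Proof.
rewrite !mxE rmorph_sum; apply: eq_bigr => l _.
by rewrite !mxE rmorphM /= conjCK mulrC.
Qed.

Lemma qform_diag_mx n (s : 'rV[C]_n) (y : 'cV[C]_n) :
  (adjmx y *m diag_mx s *m y) 0 0 = \sum_k s 0 k * (y k 0 * (y k 0)^*).
Proof. by rewrite mxE; apply: eq_bigr => k _; rewrite mul_mx_diag !mxE; ring. Qed.

Lemma unitary_mulmx n (P W : 'M[C]_n) : adjmx P *m P = 1%:M -> adjmx W *m W = 1%:M ->
  adjmx (P *m W) *m (P *m W) = 1%:M.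
Proof. by move=> unitP unitW; rewrite adjmxM mulmxA -(mulmxA _ (adjmx P)) unitP mulmx1. Qed.

Lemma unitary_sqmod_doubly_stochastic n (X : 'M[C]_n) : adjmx X *m X = 1%:M ->
  (forall k, \sum_j sqmod (X k j) = 1) /\ (forall j, \sum_k sqmod (X k j) = 1).
Proof.
move=> XtX; have XXt := mulmx1C XtX; split.
  move=> k; apply: complexI; rewrite rmorph_sum rmorph1.
  move/matrixP/(_ k k): XXt; rewrite !mxE eqxx mulr1n => <-.
  by apply: eq_bigr => j _; rewrite !mxE sqmodE.
move=> j; apply: complexI; rewrite rmorph_sum rmorph1.
move/matrixP/(_ j j): XtX; rewrite !mxE eqxx mulr1n => <-.
by apply: eq_bigr => k _; rewrite !mxE mulrC sqmodE.
Qed.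

Section Spectral.
Variables (n : nat) (A : 'M[C]_n).
Hypothesis hermA : A \is hermsymmx.
Let P := spectralmx A.
Let s := spectral_diag A.

Lemma spectralmx_mul_adj : P *m adjmx P = 1%:M.
Proof. by apply/unitarymxP; apply: spectral_unitarymx. Qed.

Lemma adj_mul_spectralmx : adjmx P *m P = 1%:M.
Proof. exact: mulmx1C spectralmx_mul_adj. Qed.

Lemma qform_spectral (x : 'cV[C]_n) :
  (adjmx x *m A *m x) 0 0 = \sum_k s 0 k * ((P *m x) k 0 * ((P *m x) k 0)^*).
Proof.
have -> : A = adjmx P *m diag_mx s *m P.
  by rewrite [LHS](orthomx_spectralP (hermitian_normalmx hermA))
             invmx_unitary ?spectral_unitarymx.
by rewrite -qform_diag_mx adjmxM !mulmxA.
Qed.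

Lemma spectral_diag_qform k :
  s 0 k = (adjmx (col k (adjmx P)) *m A *m col k (adjmx P)) 0 0.
Proof.
rewrite qform_spectral.
have -> : P *m col k (adjmx P) = col k 1%:M
  by rewrite !colE mulmxA spectralmx_mul_adj.
rewrite (bigD1 k) //= big1 ?addr0; first by rewrite !mxE eqxx conjC1 !mulr1.
by move=> j jk; rewrite !mxE (negbTE jk) mul0r mulr0.
Qed.

End Spectral.

Definition basis_diag n (A W : 'M[C]_n) (j : 'I_n) : R :=
  complex.Re ((adjmx (col j W) *m A *m col j W) 0 0).

Lemma vN_entropy_le_basis_diag n (A W : 'M[C]_n) : A \is hermsymmx ->
  (forall x : 'cV[C]_n, 0 <= (adjmx x *m A *m x) 0 0) -> adjmx W *m W = 1%:M ->
  vN_entropy A <= - \sum_j eta (basis_diag A W j).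
Proof.
move=> hermA psdA unitW.
set P := spectralmx A; set s := spectral_diag A; set X := P *m W.
have s_real k : s 0 k = (complex.Re (s 0 k))%:C%C /\ 0 <= complex.Re (s 0 k).
  by apply: ge0_complex_real; rewrite /s spectral_diag_qform.
have [Xrow Xcol] :=
  unitary_sqmod_doubly_stochastic (unitary_mulmx (adj_mul_spectralmx A) unitW).
have diagE j : basis_diag A W j = \sum_k sqmod (X k j) * complex.Re (s 0 k).
  rewrite /basis_diag qform_spectral // -/P.
  have -> : P *m col j W = col j X by rewrite !colE mulmxA.
  rewrite (eq_bigr (fun k => (sqmod (X k j) * complex.Re (s 0 k))%:C%C)).
    by rewrite -rmorph_sum.
  by move=> k _; rewrite !mxE sqmodE {1}(s_real k).1 -rmorphM mulrC.
rewrite /vN_entropy lerN2; under eq_bigr => j _ do rewrite diagE.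
apply: (sum_eta_doubly_stochastic (M := fun k j => sqmod (X k j))) => //.
- by move=> k j; apply: sqmod_ge0.
- by move=> k; case: (s_real k).
Qed.

Lemma adjcol_mul_col n (U : 'M[C]_n) i : adjmx U *m U = 1%:M ->
  adjmx (col i U) *m col i U = 1%:M.
Proof.
move=> unitU; apply/matrixP => a b; rewrite [a]ord1 [b]ord1.
by rewrite adjcol_mulE unitU !mxE !eqxx.
Qed.

Lemma sum_proj1 n (U : 'M[C]_n) : adjmx U *m U = 1%:M -> \sum_i proj1 U i = 1%:M.
Proof.
move=> /mulmx1C <-; apply/matrixP => a c; rewrite summxE !mxE.
by apply: eq_bigr => i _; rewrite !mxE big_ord1 !mxE.
Qed.

Lemma proj1_pvm n (U : 'M[C]_n) : adjmx U *m U = 1%:M -> rank1_pvm (proj1 U).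
Proof.
move=> unitU; split; last exact: sum_proj1.
have ui1 i := adjcol_mul_col i unitU.
move=> i; split; first by apply: adjmx_hermsymmx; rewrite adjmxM adjmxK.
split; first by rewrite /proj1 mulmxA -(mulmxA (col i U)) ui1 mulmx1.
apply/eqP; rewrite eqn_leq mulmx_max_rank /= lt0n mxrank_eq0.
apply/eqP => /(congr1 mxtrace).
by rewrite /proj1 mxtrace_mulC ui1 mxtrace0 mxtrace1 => /eqP; rewrite oner_eq0.
Qed.

Lemma proj1_sandwich n (W : 'M[C]_n) k (M : 'M[C]_n) :
  proj1 W k *m M *m proj1 W k =
  ((adjmx (col k W) *m M *m col k W) 0 0) *: proj1 W k.
Proof.
rewrite /proj1; set w := col k W.
have -> : w *m adjmx w *m M *m (w *m adjmx w) = w *m (adjmx w *m M *m w) *m adjmx w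
  by rewrite !mulmxA.
by rewrite {1}[adjmx w *m M *m w]mx11_scalar mul_mx_scalar -scalemxAl.
Qed.

Lemma mxtrace_proj1_mul n (W : 'M[C]_n) k (M : 'M[C]_n) :
  \tr (proj1 W k *m M) = (adjmx (col k W) *m M *m col k W) 0 0.
Proof. by rewrite /proj1 -mulmxA mxtrace_mulC /mxtrace big_ord1. Qed.

Lemma eigen_decomp n (A U : 'M[C]_n) : orth_eigenbasis A U ->
  A = \sum_i ((adjmx (col i U) *m A *m col i U) 0 0) *: proj1 U i.
Proof.
case=> unitU eigU.
have eigE i : A *m col i U = ((adjmx (col i U) *m A *m col i U) 0 0) *: col i U.
  have [l eigl] := eigU i.
  by rewrite -mulmxA eigl -scalemxAr mxE adjcol_mul_col // mxE eqxx mulr1n mulr1.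
rewrite -[A in LHS]mulmx1 -(sum_proj1 unitU) mulmx_sumr; apply: eq_bigr => i _.
by rewrite /proj1 mulmxA eigE -scalemxAl.
Qed.

Section SpectralSum.
Variables (n : nat) (W : 'M[C]_n) (d : 'I_n -> R).
Hypothesis unitW : adjmx W *m W = 1%:M.
Hypothesis d_ge0 : forall k, 0 <= d k.

Definition spectral_sum : 'M[C]_n := \sum_k (d k)%:C%C *: proj1 W k.

Lemma qform_spectral_sum (x y : 'cV[C]_n) : (adjmx x *m spectral_sum *m y) 0 0 =
  \sum_k (d k)%:C%C * ((adjmx x *m col k W) 0 0 * (adjmx (col k W) *m y) 0 0).
Proof.
rewrite mulmx_sumr mulmx_suml summxE; apply: eq_bigr => k _.
by rewrite -scalemxAr -scalemxAl mxE /proj1 !mulmxA -[_ *m _ *m y]mulmxA mx11_mulE.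
Qed.

Lemma spectral_sum_herm : spectral_sum \is hermsymmx.
Proof.
apply: hermsymmx_entry => i j; rewrite !summxE rmorph_sum; apply: eq_bigr => k _.
have dR : ((d k)%:C%C : C)^* = (d k)%:C%C by exact: conjc_real.
by rewrite !mxE !big_ord1 !mxE !rmorphM /= conjCK dR; ring.
Qed.

Lemma spectral_sum_psd (x : 'cV[C]_n) : 0 <= (adjmx x *m spectral_sum *m x) 0 0.
Proof.
rewrite qform_spectral_sum; apply: sumr_ge0 => k _.
rewrite [(adjmx (col k W) *m x) 0 0]adjmx_mul_conj sqmodE -rmorphM ler0c.
by rewrite mulr_ge0 // sqmod_ge0.
Qed.

Lemma basis_diag_spectral_sum j :
  (adjmx (col j W) *m spectral_sum *m col j W) 0 0 = (d j)%:C%C.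
Proof.
rewrite qform_spectral_sum (bigD1 j) //= big1 ?addr0.
  by rewrite !adjcol_mulE unitW !mxE eqxx mulr1n !mulr1.
by move=> k kj; rewrite adjcol_mulE unitW !mxE eq_sym (negbTE kj) mul0r mulr0.
Qed.

Lemma vN_entropy_spectral_sum : vN_entropy spectral_sum = - \sum_k eta (d k).
Proof.
apply/le_anti/andP; split.
  have := vN_entropy_le_basis_diag spectral_sum_herm spectral_sum_psd unitW.
  by rewrite /basis_diag; under eq_bigr => j _ do rewrite basis_diag_spectral_sum.
set P := spectralmx spectral_sum; set X := P *m W.
have [Xrow Xcol] :=
  unitary_sqmod_doubly_stochastic (unitary_mulmx (adj_mul_spectralmx spectral_sum) unitW).
have sE k : spectral_diag spectral_sum 0 k = (\sum_j sqmod (X k j) * d j)%:C%C.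
  rewrite spectral_diag_qform ?spectral_sum_herm // qform_spectral_sum rmorph_sum.
  apply: eq_bigr => j _.
  have XE : (adjmx (col k (adjmx P)) *m col j W) 0 0 = X k j.
    by rewrite !mxE; apply: eq_bigr => l _; rewrite !mxE conjCK.
  by rewrite [(adjmx (col j W) *m _) 0 0]adjmx_mul_conj XE sqmodE -!rmorphM mulrC.
rewrite /vN_entropy lerN2; under eq_bigr => k _ do rewrite sE /=.
apply: (sum_eta_doubly_stochastic (M := fun j k => sqmod (X k j))) => //.
by move=> j k; apply: sqmod_ge0.
Qed.

End SpectralSum.

End ComplexMatrices.

Lemma sum_mxtens_index (T : nmodType) n m (F : 'I_(n * m) -> T) :
  \sum_k F k = \sum_(i < n) \sum_(j < m) F (mxtens_index (i, j)).
Proof.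
rewrite pair_big /= (reindex (@mxtens_index n m)) /=; last first.
  by exists (@mxtens_unindex n m) => k _; rewrite (mxtens_indexK, mxtens_unindexK).
by apply: eq_bigr => -[i j] _.
Qed.

Lemma sum_mulrb_eq (T : nmodType) p (F : 'I_p -> T) k :
  \sum_b F b *+ (b == k) = F k.
Proof.
rewrite (bigD1 k) //= eqxx mulr1n big1 ?addr0 //.
by move=> b /negbTE ->; rewrite mulr0n.
Qed.

Section Tensor.
Variable K : comPzRingType.

Lemma tensmx11 n m : (1%:M : 'M[K]_n) *t (1%:M : 'M[K]_m) = 1%:M.
Proof.
apply/matrixP => a b.
case: (mxtens_indexP a) => i j; case: (mxtens_indexP b) => k l.
rewrite tensmxE !mxE (inj_eq (can_inj (@mxtens_indexK n m))) xpair_eqE.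
by rewrite -natrM mulnb.
Qed.

Lemma tensmx_suml (I : finType) p q r t (F : I -> 'M[K]_(p, q)) (B : 'M[K]_(r, t)) :
  (\sum_i F i) *t B = \sum_i (F i *t B).
Proof.
apply/matrixP => a b; rewrite !mxE !summxE mulr_suml.
by apply: eq_bigr => i _; rewrite !mxE.
Qed.

Lemma tensmx_sumr (I : finType) p q r t (A : 'M[K]_(p, q)) (F : I -> 'M[K]_(r, t)) :
  A *t (\sum_i F i) = \sum_i (A *t F i).
Proof.
apply/matrixP => a b; rewrite !mxE !summxE mulr_sumr.
by apply: eq_bigr => i _; rewrite !mxE.
Qed.

End Tensor.

Section PartialTrace.
Variable R : realType.
Local Notation C := R[i].

Lemma tens_unitary n m (U : 'M[C]_n) (V : 'M[C]_m) :
  adjmx U *m U = 1%:M -> adjmx V *m V = 1%:M -> adjmx (U *t V) *m (U *t V) = 1%:M.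
Proof. by move=> unitU unitV; rewrite adjmx_tens tensmx_mul unitU unitV tensmx11. Qed.

Variables n m : nat.

Lemma ptrP_sum (I : finType) (F : I -> 'M[C]_(n * m)) :
  ptrP (\sum_i F i) = \sum_i ptrP (F i).
Proof.
apply/matrixP => a c; rewrite !mxE summxE.
under eq_bigr do rewrite summxE.
by rewrite exchange_big; apply: eq_bigr => i _; rewrite mxE.
Qed.

Lemma ptrC_sum (I : finType) (F : I -> 'M[C]_(n * m)) :
  ptrC (\sum_i F i) = \sum_i ptrC (F i).
Proof.
apply/matrixP => a c; rewrite !mxE summxE.
under eq_bigr do rewrite summxE.
by rewrite exchange_big; apply: eq_bigr => i _; rewrite mxE.
Qed.

Lemma ptrP_scale c (M : 'M[C]_(n * m)) : ptrP (c *: M) = c *: ptrP M.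
Proof.
apply/matrixP => a b; rewrite !mxE mulr_sumr.
by apply: eq_bigr => i _; rewrite !mxE.
Qed.

Lemma ptrC_scale c (M : 'M[C]_(n * m)) : ptrC (c *: M) = c *: ptrC M.
Proof.
apply/matrixP => a b; rewrite !mxE mulr_sumr.
by apply: eq_bigr => i _; rewrite !mxE.
Qed.

Lemma mxtrace_mul_ptrP (A : 'M[C]_n) (M : 'M[C]_(n * m)) :
  \tr (A *m ptrP M) = \tr ((A *t (1%:M : 'M[C]_m)) *m M).
Proof.
rewrite /mxtrace sum_mxtens_index; apply: eq_bigr => a _.
rewrite mxE; under eq_bigr => c _ do rewrite mxE mulr_sumr.
rewrite exchange_big /=; apply: eq_bigr => b _.
rewrite mxE sum_mxtens_index; apply: eq_bigr => c _.
under eq_bigr => d _ do rewrite tensmxE !mxE mulrnAr mulrnAl eq_sym.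
by rewrite sum_mulrb_eq mulr1.
Qed.

Definition tensv (x : 'cV[C]_n) (y : 'cV[C]_m) : 'cV[C]_(n * m) :=
  \col_k (x (mxtens_unindex k).1 0 * y (mxtens_unindex k).2 0).

Lemma tensvE x y a b : tensv x y (mxtens_index (a, b)) 0 = x a 0 * y b 0.
Proof. by rewrite !mxE mxtens_indexK. Qed.

Lemma col_tensmx (U : 'M[C]_n) (V : 'M[C]_m) i j :
  col (mxtens_index (i, j)) (U *t V) = tensv (col i U) (col j V).
Proof.
apply/matrixP => a b; rewrite [b]ord1.
by case: (mxtens_indexP a) => k l; rewrite tensvE !mxE !mxtens_indexK.
Qed.

Lemma proj1_tensmx (U : 'M[C]_n) (V : 'M[C]_m) i j :
  proj1 U i *t proj1 V j = proj1 (U *t V) (mxtens_index (i, j)).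
Proof.
rewrite /proj1 col_tensmx; apply/matrixP => a b.
case: (mxtens_indexP a) => k l; case: (mxtens_indexP b) => k' l'.
rewrite tensmxE !mxE !big_ord1 !mxE !mxtens_indexK /= rmorphM; ring.
Qed.

Lemma ptrP_proj1_tensmx (U : 'M[C]_n) (V : 'M[C]_m) i j :
  adjmx V *m V = 1%:M -> ptrP (proj1 (U *t V) (mxtens_index (i, j))) = proj1 U i.
Proof.
move=> /matrixP/(_ j j); rewrite !mxE eqxx mulr1n => vj1.
rewrite /proj1 col_tensmx; apply/matrixP => a c.
rewrite !mxE big_ord1 -[RHS]mulr1 -vj1 mulr_sumr; apply: eq_bigr => b _.
rewrite !mxE big_ord1 !tensvE !mxE rmorphM !mxtens_indexK /=; ring.
Qed.

Lemma ptrC_proj1_tensmx (U : 'M[C]_n) (V : 'M[C]_m) i j :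
  adjmx U *m U = 1%:M -> ptrC (proj1 (U *t V) (mxtens_index (i, j))) = proj1 V j.
Proof.
move=> /matrixP/(_ i i); rewrite !mxE eqxx mulr1n => ui1.
rewrite /proj1 col_tensmx; apply/matrixP => a c.
rewrite !mxE big_ord1 -[RHS]mulr1 -ui1 mulr_sumr; apply: eq_bigr => b _.
rewrite !mxE big_ord1 !tensvE !mxE rmorphM !mxtens_indexK /=; ring.
Qed.

(* The matrix of the map [z |-> x (x) z] from H_P to H_C (x) H_P. *)
Definition tensv_mx (x : 'cV[C]_n) : 'M[C]_(n * m, m) :=
  \matrix_(a, l) (x (mxtens_unindex a).1 0 *+ ((mxtens_unindex a).2 == l)).

Lemma tensv_mxE (x : 'cV[C]_n) a b l :
  tensv_mx x (mxtens_index (a, b)) l = x a 0 *+ (b == l).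
Proof. by rewrite mxE mxtens_indexK. Qed.

Lemma mul_tensv_mx (x : 'cV[C]_n) (z : 'cV[C]_m) : tensv_mx x *m z = tensv x z.
Proof.
apply/matrixP => a t; rewrite [t]ord1.
case: (mxtens_indexP a) => i j; rewrite tensvE mxE.
under eq_bigr => l _ do rewrite tensv_mxE mulrnAl eq_sym.
by rewrite sum_mulrb_eq.
Qed.

Lemma ptrC_proj_tens1 (x : 'cV[C]_n) (M : 'M[C]_(n * m)) :
  ptrC (((x *m adjmx x) *t (1%:M : 'M[C]_m)) *m M) =
  adjmx (tensv_mx x) *m M *m tensv_mx x.
Proof.
apply/matrixP => k l; rewrite !mxE sum_mxtens_index.
under [RHS]eq_bigr => c _ do
  (under eq_bigr => d _ do rewrite tensv_mxE mulrnAr; rewrite sum_mulrb_eq).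
apply: eq_bigr => c _.
rewrite !mxE !sum_mxtens_index mulr_suml; apply: eq_bigr => a _.
rewrite mulr_suml; under eq_bigr => b _ do rewrite tensmxE !mxE.
under [RHS]eq_bigr => b _ do rewrite !mxE mxtens_indexK /=.
apply: eq_bigr => b _; rewrite big_ord1 !mxE.
have [->|_] := eqVneq b k; first by rewrite mulr1 mulr1n; ring.
by rewrite mulr0 mulr0n conjC0 !mul0r.
Qed.

End PartialTrace.

Section Discord.
Variable R : realType.
Local Notation C := R[i].
Variables (n m : nat) (rho : 'M[C]_(n * m)) (U : 'M[C]_n) (V : 'M[C]_m).
Hypothesis rho_density : density rho.
Hypothesis eigU : orth_eigenbasis (ptrP rho) U.
Hypothesis eigV : orth_eigenbasis (ptrC rho) V.

Let unitU : adjmx U *m U = 1%:M. Proof. by case: eigU. Qed.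
Let unitV : adjmx V *m V = 1%:M. Proof. by case: eigV. Qed.
Let rho_herm : rho \is hermsymmx. Proof. by case: rho_density. Qed.
Let rho_psd (x : 'cV[C]_(n * m)) : 0 <= (adjmx x *m rho *m x) 0 0.
Proof. by case: rho_density => _ []. Qed.

Definition joint_prob (k : 'I_(n * m)) : R := basis_diag rho (U *t V) k.
Definition prob_C (i : 'I_n) : R := \sum_j joint_prob (mxtens_index (i, j)).
Definition prob_P (j : 'I_m) : R := \sum_i joint_prob (mxtens_index (i, j)).

(* The classical conditional entropy H(q) - H(a). *)
Definition cond_entropy_joint : R :=
  \sum_i (eta (prob_C i) - \sum_j eta (joint_prob (mxtens_index (i, j)))).

Lemma joint_probE k :
  (adjmx (col k (U *t V)) *m rho *m col k (U *t V)) 0 0 = (joint_prob k)%:C%C.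
Proof. by have [] := ge0_complex_real (rho_psd (col k (U *t V))). Qed.

Lemma joint_prob_ge0 k : 0 <= joint_prob k.
Proof. by have [] := ge0_complex_real (rho_psd (col k (U *t V))). Qed.

Lemma prob_C_ge0 i : 0 <= prob_C i.
Proof. by apply: sumr_ge0 => j _; apply: joint_prob_ge0. Qed.

Lemma cond_entropy_joint_ge0 : 0 <= cond_entropy_joint.
Proof.
apply: sumr_ge0 => i _; rewrite subr_ge0.
exact: (sum_eta_le_eta_sum (fun j => joint_prob_ge0 (mxtens_index (i, j)))).
Qed.

Lemma Pi_meas_spectral : Pi_meas rho U V = spectral_sum (U *t V) joint_prob.
Proof.
rewrite /Pi_meas /spectral_sum [RHS]sum_mxtens_index.
apply: eq_bigr => i _; apply: eq_bigr => j _.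
by rewrite proj1_tensmx proj1_sandwich joint_probE.
Qed.

Lemma vN_entropy_Pi_meas : vN_entropy (Pi_meas rho U V) = - \sum_k eta (joint_prob k).
Proof.
rewrite Pi_meas_spectral vN_entropy_spectral_sum ?tens_unitary //.
exact: joint_prob_ge0.
Qed.

Lemma mxtrace_proj1_tens1 i : \tr ((proj1 U i *t 1%:M) *m rho) = (prob_C i)%:C%C.
Proof.
rewrite -(sum_proj1 unitV) tensmx_sumr mulmx_suml raddf_sum /prob_C rmorph_sum.
by apply: eq_bigr => j _; rewrite /= proj1_tensmx mxtrace_proj1_mul joint_probE.
Qed.

Lemma ptrP_spectral : ptrP rho = spectral_sum U prob_C.
Proof.
rewrite {1}(eigen_decomp eigU); apply: eq_bigr => i _; congr (_ *: _).
by rewrite -mxtrace_proj1_mul mxtrace_mul_ptrP mxtrace_proj1_tens1.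
Qed.

Lemma ptrC_spectral : ptrC rho = spectral_sum V prob_P.
Proof.
rewrite {1}(eigen_decomp eigV); apply: eq_bigr => j _; congr (_ *: _).
have -> : rho = \sum_i ((proj1 U i *t 1%:M) *m rho).
  by rewrite -mulmx_suml -tensmx_suml sum_proj1 // tensmx11 mul1mx.
rewrite ptrC_sum mulmx_sumr mulmx_suml summxE /prob_P rmorph_sum.
apply: eq_bigr => i _; rewrite ptrC_proj_tens1; set Y := tensv_mx m (col i U).
have -> : adjmx (col j V) *m (adjmx Y *m rho *m Y) *m col j V =
          adjmx (Y *m col j V) *m rho *m (Y *m col j V) by rewrite adjmxM !mulmxA.
by rewrite mul_tensv_mx -col_tensmx joint_probE.
Qed.

Lemma ptrP_Pi_meas : ptrP (Pi_meas rho U V) = ptrP rho.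
Proof.
rewrite ptrP_spectral Pi_meas_spectral /spectral_sum ptrP_sum sum_mxtens_index.
apply: eq_bigr => i _; rewrite /prob_C rmorph_sum scaler_suml.
by apply: eq_bigr => j _; rewrite ptrP_scale ptrP_proj1_tensmx.
Qed.

Lemma ptrC_Pi_meas : ptrC (Pi_meas rho U V) = ptrC rho.
Proof.
rewrite ptrC_spectral Pi_meas_spectral /spectral_sum ptrC_sum sum_mxtens_index.
rewrite exchange_big /=; apply: eq_bigr => j _.
rewrite /prob_P rmorph_sum scaler_suml.
by apply: eq_bigr => i _; rewrite ptrC_scale ptrC_proj1_tensmx.
Qed.

Lemma outcome_prob_proj1 i : outcome_prob rho (proj1 U) i = prob_C i.
Proof. by rewrite /outcome_prob mxtrace_proj1_tens1. Qed.

Lemma post_stateE i : post_state rho (proj1 U) i =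
  ((prob_C i)^-1)%:C%C *: (adjmx (tensv_mx m (col i U)) *m rho *m tensv_mx m (col i U)).
Proof. by rewrite /post_state outcome_prob_proj1 /proj1 ptrC_proj_tens1 fmorphV. Qed.

Lemma qform_post_state i (z : 'cV[C]_m) :
  (adjmx z *m post_state rho (proj1 U) i *m z) 0 0 = ((prob_C i)^-1)%:C%C *
    (adjmx (tensv (col i U) z) *m rho *m tensv (col i U) z) 0 0.
Proof.
by rewrite post_stateE -scalemxAr -scalemxAl mxE -mul_tensv_mx adjmxM !mulmxA.
Qed.

Lemma basis_diag_post_state i j : basis_diag (post_state rho (proj1 U) i) V j =
  (prob_C i)^-1 * joint_prob (mxtens_index (i, j)).
Proof. by rewrite /basis_diag qform_post_state -col_tensmx joint_probE -rmorphM. Qed.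

Lemma vN_entropy_post_state i : 0 < prob_C i ->
  vN_entropy (post_state rho (proj1 U) i) <=
  - \sum_j eta ((prob_C i)^-1 * joint_prob (mxtens_index (i, j))).
Proof.
move=> a_gt0.
have herm : post_state rho (proj1 U) i \is hermsymmx.
  rewrite post_stateE; apply: adjmx_hermsymmx.
  by rewrite adjmx_scale_real !adjmxM adjmxK (hermsymmx_adjmx rho_herm) mulmxA.
have psd (z : 'cV[C]_m) : 0 <= (adjmx z *m post_state rho (proj1 U) i *m z) 0 0.
  by rewrite qform_post_state mulr_ge0 // ler0c invr_ge0 ltW.
have := vN_entropy_le_basis_diag herm psd unitV.
by under eq_bigr => j _ do rewrite basis_diag_post_state.
Qed.

Lemma post_state_entropy_le i : 0 < prob_C i ->
  prob_C i * vN_entropy (post_state rho (proj1 U) i) <=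
  eta (prob_C i) - \sum_j eta (joint_prob (mxtens_index (i, j))).
Proof.
move=> a_gt0; apply: (le_trans (ler_wpM2l (ltW a_gt0) (vN_entropy_post_state a_gt0))).
rewrite mulrN mulr_sumr.
under eq_bigr => j _ do rewrite mulr_eta_invl ?joint_prob_ge0 //.
rewrite sumrB -mulr_suml -/(prob_C i) /eta gt_eqF //; lra.
Qed.

Lemma cond_entropy_meas_proj1_le :
  cond_entropy_meas rho (proj1 U) <= cond_entropy_joint.
Proof.
rewrite /cond_entropy_meas (eq_bigl (fun i => 0 < prob_C i)); last first.
  by move=> i; rewrite outcome_prob_proj1.
under eq_bigr => i _ do rewrite outcome_prob_proj1.
apply: (le_trans (ler_sum _ (fun i => @post_state_entropy_le i))).
rewrite [X in X <= _]big_mkcond; apply: ler_sum => i _.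
case: ifP => // _; rewrite subr_ge0.
exact: (sum_eta_le_eta_sum (fun j => joint_prob_ge0 (mxtens_index (i, j)))).
Qed.

Lemma vN_entropy_ptrP : vN_entropy (ptrP rho) = - \sum_i eta (prob_C i).
Proof. by rewrite ptrP_spectral vN_entropy_spectral_sum //; apply: prob_C_ge0. Qed.

End Discord.

Theorem theorem2 (R : realType) (nC nP : nat) (rho : 'M[R[i]]_(nC * nP))
  (U : 'M[R[i]]_nC) (V : 'M[R[i]]_nP) :
  density rho ->
  orth_eigenbasis (ptrP rho) U ->
  orth_eigenbasis (ptrC rho) V ->
  discord rho <= MID rho U V.
Proof.
move=> rho_density eigU eigV.
have inf_le : inf [set x : R | exists k (N : 'I_k -> 'M[R[i]]_nC),
    rank1_pvm N /\ x = cond_entropy_meas rho N] <= cond_entropy_joint rho U V.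
  apply: (inf_le_ub _ (cond_entropy_meas_proj1_le U rho_density eigV)
    (cond_entropy_joint_ge0 U V rho_density)).
  by exists nC, (proj1 U); split => //; apply: proj1_pvm; case: eigU.
rewrite /discord /MID /mutual_info /cond_entropy.
rewrite ptrP_Pi_meas ?ptrC_Pi_meas ?vN_entropy_Pi_meas //.
rewrite (vN_entropy_ptrP rho_density eigU eigV) sum_mxtens_index.
move: inf_le; rewrite /cond_entropy_joint sumrB; lra.
Qed.
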